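(* Let $\Gamma_1,\Gamma_2$ be propositional theories over a signature $\mathcal L$ (possibly infinite). Then $\Gamma_1$ and $\Gamma_2$ are uniformly equivalent if and only if $C_u(\Gamma_1)=C_u(\Gamma_2)$.
   Context: A propositional signature $\mathcal L$ is a set of atoms. Formulas are built from atoms and $\bot$ using $\wedge,\vee,\to$; $\neg\phi$ abbreviates $\phi\to\bot$ and $\top$ abbreviates $\bot\to\bot$. A theory is a set of formulas. An HT-interpretation over $\mathcal L$ is a pair $(X,Y)$ with $X\subseteq Y\subseteq\mathcal L$; it is total if $X=Y$. $Y\models\phi$ denotes classical satisfaction (atoms in $Y$ true, all others false). HT-satisfaction is defined recursively: $(X,Y)\models a$ iff $a\in X$ for an atom $a$; $(X,Y)\not\models\bot$; $(X,Y)\models\phi\wedge\psi$ iff both conjuncts are satisfied; $(X,Y)\models\phi\vee\psi$ iff one disjunct is satisfied; $(X,Y)\models\phi\to\psi$ iff (i) $(X,Y)\not\models\phi$ or $(X,Y)\models\psi$, and (ii) $Y\models\phi\to\psi$. $(X,Y)\models\Gamma$ iff $(X,Y)$ satisfies every formula of $\Gamma$. An HT-countermodel of $\Gamma$ is an HT-interpretation $(X,Y)$ with $(X,Y)\not\models\Gamma$; $C_s(\Gamma)$ is the set of HT-countermodels of $\Gamma$ (over $\mathcal L$). A total $(Y,Y)$ is an equilibrium model of $\Gamma$ iff $(Y,Y)\models\Gamma$ and $(X,Y)\not\models\Gamma$ for every $X\subsetneq Y$; then $Y$ is an answer set of $\Gamma$. A formula is factual if it is built from atoms and $\bot$ using only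 $\wedge$, $\vee$ and implications of the form $\phi\to\bot$. Theories $\Gamma_1,\Gamma_2$ over $\mathcal L$ are uniformly equivalent iff for every signature $\mathcal L'\supseteq\mathcal L$ and every factual theory $\Gamma$ over $\mathcal L'$, the theories $\Gamma_1\cup\Gamma$ and $\Gamma_2\cup\Gamma$ have the same answer sets. An HT-interpretation $(X,Y)$ is there-closed in a set $S$ of HT-interpretations if $(Y,Y)\notin S$ and $(X',Y)\in S$ for every $X'$ with $X\subseteq X'\subsetneq Y$. $C_u(\Gamma)$ denotes the set of all HT-interpretations over $\mathcal L$ that are there-closed in $C_s(\Gamma)$. *)

From Stdlib Require Import Classical.

Inductive formula (A : Type) : Type :=
| Atom : A -> formula A
| Bot : formula A
| And : formula A -> formula A -> formula A
| Or : formula A -> formula A -> formula A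
| Imp : formula A -> formula A -> formula A.

Arguments Atom {A} _.
Arguments Bot {A}.
Arguments And {A} _ _.
Arguments Or {A} _ _.
Arguments Imp {A} _ _.

Definition theory (A : Type) := formula A -> Prop.
Definition aset (A : Type) := A -> Prop.

Definition subset {A : Type} (X Y : aset A) : Prop := forall a, X a -> Y a.
Definition psubset {A : Type} (X Y : aset A) : Prop :=
  subset X Y /\ exists a, Y a /\ ~ X a.

Fixpoint csat {A : Type} (Y : aset A) (phi : formula A) : Prop :=
  match phi with
  | Atom a => Y a
  | Bot => False
  | And p q => csat Y p /\ csat Y q
  | Or p q => csat Y p \/ csat Y q
  | Imp p q => csat Y p -> csat Y q
  end.

Fixpoint htsat {A : Type} (X Y : aset A) (phi : formula A) : Prop :=
  match phi with
  | Atom a => X a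
  | Bot => False
  | And p q => htsat X Y p /\ htsat X Y q
  | Or p q => htsat X Y p \/ htsat X Y q
  | Imp p q => (~ htsat X Y p \/ htsat X Y q) /\ csat Y (Imp p q)
  end.

Definition htsatT {A : Type} (X Y : aset A) (G : theory A) : Prop :=
  forall phi, G phi -> htsat X Y phi.

Definition HTint {A : Type} (X Y : aset A) : Prop := subset X Y.

Definition Cs {A : Type} (G : theory A) (X Y : aset A) : Prop :=
  HTint X Y /\ ~ htsatT X Y G.

Definition there_closed {A : Type} (S : aset A -> aset A -> Prop) (X Y : aset A) : Prop :=
  HTint X Y /\ ~ S Y Y /\
  (forall X', subset X X' -> psubset X' Y -> S X' Y).

Definition Cu {A : Type} (G : theory A) (X Y : aset A) : Prop :=
  there_closed (Cs G) X Y.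

Definition answer_set {A : Type} (G : theory A) (Y : aset A) : Prop :=
  htsatT Y Y G /\ (forall X, psubset X Y -> ~ htsatT X Y G).

Inductive factual {A : Type} : formula A -> Prop :=
| fact_atom : forall a, factual (Atom a)
| fact_bot : factual Bot
| fact_and : forall p q, factual p -> factual q -> factual (And p q)
| fact_or : forall p q, factual p -> factual q -> factual (Or p q)
| fact_neg : forall p, factual p -> factual (Imp p Bot).

Definition factual_theory {A : Type} (G : theory A) : Prop :=
  forall phi, G phi -> factual phi.

Fixpoint fmap {A B : Type} (f : A -> B) (phi : formula A) : formula B :=
  match phi with
  | Atom a => Atom (f a)
  | Bot => Bot
  | And p q => And (fmap f p) (fmap f q)
  | Or p q => Or (fmap f p) (fmap f q)
  | Imp p q => Imp (fmap f p) (fmap f q)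
  end.

Definition ext_union {A B : Type} (f : A -> B) (G : theory A) (H : theory B) : theory B :=
  fun psi => (exists phi, G phi /\ psi = fmap f phi) \/ H psi.

Definition injective {A B : Type} (f : A -> B) : Prop :=
  forall x y, f x = f y -> x = y.

(* Uniform equivalence: every signature L' ⊇ L is represented by a type L'
   together with an injective embedding of the atoms of L into L'. *)
Definition unif_equiv {A : Type} (G1 G2 : theory A) : Prop :=
  forall (B : Type) (f : A -> B), injective f ->
  forall H : theory B, factual_theory H ->
  forall Y : aset B, answer_set (ext_union f G1 H) Y <-> answer_set (ext_union f G2 H) Y.

From Stdlib Require Import Classical.

(* Adding a set X' of facts to G makes Y an answer set exactly when Y |= G and
   every (Z, Y) with X' ⊆ Z ⊊ Y is a countermodel of G.  Hence (X, Y) lies in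
   C_u(G) iff Y is an answer set of G ∪ X' for every X ⊆ X' ⊆ Y, and uniform
   equivalence (already for facts over L itself) forces C_u(G1) = C_u(G2).
   Conversely, if Y is an answer set of G1 ∪ H but (X, Y) with X ⊊ Y is a model
   of G2 ∪ H, then its restriction (X0, Y0) to L is a here-model of G2, hence
   outside C_u(G2) = C_u(G1); so some (X', Y0) with X0 ⊆ X' ⊊ Y0 models G1.
   Lifting X' along the embedding and joining it with X gives a model of
   G1 ∪ H strictly below Y, because factual formulas survive enlarging the
   here-world. *)

Definition preimage {A B : Type} (f : A -> B) (X : aset B) : aset A :=
  fun a => X (f a).

Definition facts {A : Type} (X : aset A) : theory A :=
  fun psi => exists a, X a /\ psi = Atom a.

Lemma csat_fmap {A B : Type} (f : A -> B) (Y : aset B) (phi : formula A) :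
  csat Y (fmap f phi) <-> csat (preimage f Y) phi.
Proof. induction phi; simpl; unfold preimage; tauto. Qed.

Lemma htsat_fmap {A B : Type} (f : A -> B) (X Y : aset B) (phi : formula A) :
  htsat X Y (fmap f phi) <-> htsat (preimage f X) (preimage f Y) phi.
Proof.
  induction phi; simpl; unfold preimage in *; try tauto.
  pose proof (csat_fmap f Y phi1); pose proof (csat_fmap f Y phi2).
  unfold preimage in *; tauto.
Qed.

Lemma htsat_ext_here {A : Type} (X X' Y : aset A) (phi : formula A) :
  (forall a, X a <-> X' a) -> (htsat X Y phi <-> htsat X' Y phi).
Proof. intros E; induction phi; simpl; try tauto; apply E. Qed.

Lemma csat_of_htsat {A : Type} (X Y : aset A) (phi : formula A) :
  subset X Y -> htsat X Y phi -> csat Y phi.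
Proof. intros S; induction phi; simpl; try tauto; apply S. Qed.

Lemma factual_htsat_mono {A : Type} (X X' Y : aset A) (phi : formula A) :
  factual phi -> subset X X' -> subset X' Y -> htsat X Y phi -> htsat X' Y phi.
Proof.
  intros F S1 S2; induction F; simpl; try tauto.
  - apply S1.
  - intros [_ Hn]; split; [left|]; auto.
    intro Hp; apply Hn, (csat_of_htsat X' Y p S2 Hp).
Qed.

Lemma htsatT_ext_union {A B : Type} (f : A -> B) (G : theory A) (H : theory B)
  (X Y : aset B) :
  htsatT X Y (ext_union f G H) <->
  htsatT (preimage f X) (preimage f Y) G /\ htsatT X Y H.
Proof.
  split.
  - intros T; split.
    + intros phi Hp; apply htsat_fmap, T; left; eauto.
    + intros psi Hp; apply T; right; exact Hp.
  - intros [TG TH] psi [[phi [Hp ->]] | Hp].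
    + apply htsat_fmap, TG, Hp.
    + apply TH, Hp.
Qed.

Lemma htsatT_with_facts {A : Type} (G : theory A) (X Z Y : aset A) :
  htsatT Z Y (ext_union (fun a => a) G (facts X)) <-> htsatT Z Y G /\ subset X Z.
Proof.
  rewrite htsatT_ext_union; split.
  - intros [TG TF]; split; [exact TG|].
    intros a Xa; exact (TF (Atom a) (ex_intro _ a (conj Xa eq_refl))).
  - intros [TG S]; split; [exact TG|].
    intros psi [a [Xa ->]]; exact (S a Xa).
Qed.

Lemma facts_factual {A : Type} (X : aset A) : factual_theory (facts X).
Proof. intros psi [a [_ ->]]; constructor. Qed.

Lemma not_Cs_total {A : Type} (G : theory A) (Y : aset A) :
  ~ Cs G Y Y <-> htsatT Y Y G.
Proof.
  split.
  - intros N; apply NNPP; intro C; apply N; split; [intros a h; exact h | exact C].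
  - intros T [_ C]; exact (C T).
Qed.

Lemma Cu_total_iff {A : Type} (G : theory A) (Y : aset A) :
  Cu G Y Y <-> htsatT Y Y G.
Proof.
  split.
  - intros [_ [N _]]; apply not_Cs_total, N.
  - intros T; split; [intros a h; exact h | split; [apply not_Cs_total, T |]].
    intros X' S [_ [a [Ya nXa]]]; exfalso; exact (nXa (S a Ya)).
Qed.

Lemma answer_set_facts {A : Type} (G : theory A) (X Y : aset A) :
  answer_set (ext_union (fun a => a) G (facts X)) Y <->
  subset X Y /\ htsatT Y Y G /\
  (forall Z, subset X Z -> psubset Z Y -> ~ htsatT Z Y G).
Proof.
  unfold answer_set; split.
  - intros [T M]; apply htsatT_with_facts in T as [TG SX].
    split; [exact SX | split; [exact TG |]].
    intros Z SZ PZ TZ; apply (M Z PZ), htsatT_with_facts; split; assumption.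
  - intros [SX [TG M]]; split; [apply htsatT_with_facts; split; assumption |].
    intros Z PZ TZ; apply htsatT_with_facts in TZ as [TGZ SZ].
    exact (M Z SZ PZ TGZ).
Qed.

Lemma Cu_iff_answer_set_facts {A : Type} (G : theory A) (X Y : aset A) :
  Cu G X Y <->
  subset X Y /\
  (forall X', subset X X' -> subset X' Y ->
   answer_set (ext_union (fun a => a) G (facts X')) Y).
Proof.
  split.
  - intros [SXY [NT Cl]]; split; [exact SXY |].
    intros X' S1 S2; apply answer_set_facts.
    split; [exact S2 | split; [apply not_Cs_total, NT |]].
    intros Z SZ PZ; apply (Cl Z (fun a h => SZ a (S1 a h)) PZ).
  - intros [SXY AS]; split; [exact SXY | split].
    + apply not_Cs_total.
      apply (proj1 (answer_set_facts G Y Y) (AS Y SXY (fun a h => h))).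
    + intros X' S1 PS; split; [apply PS |].
      destruct (proj1 (answer_set_facts G X' Y) (AS X' S1 (proj1 PS))) as [_ [_ M]].
      exact (M X' (fun a h => h) PS).
Qed.

Lemma Cu_eq_of_unif_equiv {A : Type} (G1 G2 : theory A) :
  unif_equiv G1 G2 -> forall X Y : aset A, Cu G1 X Y <-> Cu G2 X Y.
Proof.
  intros U X Y; rewrite !Cu_iff_answer_set_facts.
  assert (id_inj : injective (fun a : A => a)) by (intros x y e; exact e).
  split; intros [SXY AS]; split; [exact SXY | | exact SXY |];
    intros X' S1 S2; apply (U A _ id_inj (facts X') (facts_factual X')), AS; assumption.
Qed.

Lemma Cu_eq_proper_here_model {A : Type} (G1 G2 : theory A)
  (HC : forall X Y : aset A, Cu G1 X Y <-> Cu G2 X Y) (X Y : aset A) :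
  psubset X Y -> htsatT Y Y G1 -> htsatT X Y G2 ->
  exists X', subset X X' /\ psubset X' Y /\ htsatT X' Y G1.
Proof.
  intros PXY TY TX; apply NNPP; intro N.
  assert (C1 : Cu G1 X Y).
  { split; [apply PXY | split; [apply not_Cs_total, TY |]].
    intros X' S PS; split; [apply PS |].
    intro T'; apply N; exists X'; auto. }
  apply HC in C1 as [_ [_ Cl]].
  destruct (Cl X (fun a h => h) PXY) as [_ C]; exact (C TX).
Qed.

Lemma answer_set_no_lifted_here_model {A B : Type} (f : A -> B) (G : theory A)
  (H : theory B) (Y X : aset B) (X' : aset A) :
  injective f -> factual_theory H -> answer_set (ext_union f G H) Y ->
  subset X Y -> htsatT X Y H ->
  subset (preimage f X) X' -> psubset X' (preimage f Y) ->
  ~ htsatT X' (preimage f Y) G.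
Proof.
  intros finj HF [_ M] SXY TH S1 PS TX'.
  set (X'' := fun b => X b \/ exists a, f a = b /\ X' a).
  assert (E : forall a, X' a <-> preimage f X'' a).
  { intro a; unfold X'', preimage; split.
    - intros h; right; eauto.
    - intros [h | [a' [e h]]]; [apply S1, h |].
      apply finj in e; subst; exact h. }
  assert (SX'' : subset X'' Y).
  { intros b [h | [a [<- h]]]; [apply SXY, h | apply PS, h]. }
  apply (M X'').
  - split; [exact SX'' |].
    destruct PS as [_ [a [Ya nXa]]]; exists (f a).
    split; [exact Ya | intro h; apply nXa, E, h].
  - apply htsatT_ext_union; split.
    + intros phi Hp; apply (htsat_ext_here X'), TX', Hp; exact E.
    + intros psi Hp; apply (factual_htsat_mono X); auto.
      intros b h; left; exact h.
Qed.

Lemma answer_set_transfer {A B : Type} (G1 G2 : theory A)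
  (HC : forall X Y : aset A, Cu G1 X Y <-> Cu G2 X Y)
  (f : A -> B) (H : theory B) (Y : aset B) :
  injective f -> factual_theory H ->
  answer_set (ext_union f G1 H) Y -> answer_set (ext_union f G2 H) Y.
Proof.
  intros finj HF AS; pose proof AS as [TY M].
  apply htsatT_ext_union in TY as [TY1 TYH].
  assert (TY2 : htsatT (preimage f Y) (preimage f Y) G2)
    by apply Cu_total_iff, HC, Cu_total_iff, TY1.
  split; [apply htsatT_ext_union; split; assumption |].
  intros X PXY TX; apply htsatT_ext_union in TX as [TX2 TXH].
  destruct (classic (psubset (preimage f X) (preimage f Y))) as [P | NP].
  - destruct (Cu_eq_proper_here_model G1 G2 HC _ _ P TY1 TX2) as [X' [S1 [PS T']]].
    exact (answer_set_no_lifted_here_model f G1 H Y X X' finj HF AS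
             (proj1 PXY) TXH S1 PS T').
  - assert (E : forall a, preimage f Y a <-> preimage f X a).
    { intro a; split; [| apply (proj1 PXY)].
      intro h; apply NNPP; intro n; apply NP.
      split; [intros a' h'; apply (proj1 PXY), h' | eauto]. }
    apply (M X PXY), htsatT_ext_union; split; [| exact TXH].
    intros phi Hp; apply (htsat_ext_here (preimage f Y)), TY1, Hp; exact E.
Qed.

Theorem mainTheorem1 (A : Type) (G1 G2 : theory A) :
  unif_equiv G1 G2 <-> (forall X Y : aset A, Cu G1 X Y <-> Cu G2 X Y).
Proof.
  split.
  - apply Cu_eq_of_unif_equiv.
  - intros HC B f finj H HF Y; split; apply answer_set_transfer; auto.
    intros X Z; symmetry; apply HC.
Qed.
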